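(* Let $\mathcal{G}$ be a network of type $\mathcal{C}^1$ with exactly two stubborn agents $s_1,s_2$, neither of which has a self-loop ($w_{s_1s_1}=w_{s_2s_2}=0$), whose opinions evolve by the Friedkin–Johnsen model $\mathbf{x}(k+1)=(I-\beta)W\mathbf{x}(k)+\beta\mathbf{x}(0)$; let $m$ be a global communicator and let $\mathcal{T}_1,\dots,\mathcal{T}_4$ be defined relative to $m$. Suppose $s_1$ has a direct path to $s_2$. Let $(a,b,d)$ be a permissible non-redundant edge modification such that: node $a$ satisfies (i) $a\in\mathcal{T}_3$ and (ii) every simple path from $m$ to $a$ passes through $s_2$; node $d$ violates (i) or (ii) (or both); and $\beta_{s_2}\ge 1/2$. Then the modification increases the influence centrality $c_{s_2}$.
   Context: Let $\mathcal{G}=(\mathcal{V},\mathcal{E})$, $\mathcal{V}=\{1,\dots,n\}$, be a directed graph, where an edge $(i,j)$ means information flows from $i$ to $j$. Its weighted adjacency matrix $W=[w_{ij}]$ is row-stochastic with $w_{ij}>0$ iff $(j,i)\in\mathcal{E}$. In the Friedkin–Johnsen model, $\beta=\mathrm{diag}(\beta_1,\dots,\beta_n)$ with $\beta_i\in[0,1]$, and agent $i$ is stubborn if $\beta_i>0$. Here exactly two agents $s_1,s_2$ are stubborn, with $\beta_{s_1},\beta_{s_2}\in(0,1)$. The influence centrality vector is $\mathbf{c}=P^T\mathbb{1}_n/n$ with $P=(I_n-(I_n-\beta)W)^{-1}\beta$ (and $c_{s_1}+c_{s_2}=1$). ''Increases the influence centrality of $s_2$'' means $c_{s_2}$ is strictly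 larger after the modification. Type $\mathcal{C}^1$: $\mathcal{G}$ is strongly connected and some node $m$ belongs to every cycle of $\mathcal{G}$ other than self-loops; such an $m$ is a global communicator. The stubborn agents are labelled using the level decomposition relative to $m$: the nodes are partitioned into disjoint sets $\mathcal{L}_0^m=\{m\},\mathcal{L}_1^m,\dots,\mathcal{L}_q^m$ such that every node $j\in\mathcal{L}_z^m$ ($z\ge1$) has its in-neighbours (other than itself) only in $\{m\}\cup\mathcal{L}_1^m\cup\dots\cup\mathcal{L}_{z-1}^m$ and at least one in-neighbour in $\mathcal{L}_{z-1}^m$; $s_1\in\mathcal{L}_u^m$, $s_2\in\mathcal{L}_v^m$ with $u\le v$. A direct path from $i$ to $j$ is a path from $i$ to $j$ that does not pass through $m$. The nodes are classified as: $\mathcal{T}_1$: nodes having a direct path from $s_1$ but not from $s_2$; $\mathcal{T}_2$: direct path from $s_2$ but not from $s_1$; $\mathcal{T}_3$: direct paths from both; $\mathcal{T}_4$: from neither. By convention $s_1\in\mathcal{T}_1$, $m\in\mathcal{T}_3$, and when $s_1$ has a direct path to $s_2$, $s_2$ and every node with a direct path from $s_2$ belong to $\mathcal{T}_3$ (so $\mathcal{T}_2=\emptyset$). Edge modification $(a,b,d)$: for distinct nodes $a,b,d$ with $w_{bd}>0$ and some $0<w<w_{bd}$, replace $w_{ba}$ by $w_{ba}+w$ (adding edge $(a,b)$ if absent) and $w_{bd}$ by $w_{bd}-w$, so the row sum of $b$ is unchanged. It is permissible if the modified network is still of type $\mathcal{C}^1$; redundant if it changes the influence centrality of neither stubborn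 agent, non-redundant otherwise. *)

From HB Require Import structures.
From mathcomp Require Import all_boot all_order all_algebra.
Set Implicit Arguments. Unset Strict Implicit. Unset Printing Implicit Defensive.
Import Order.TTheory GRing.Theory Num.Theory.
Local Open Scope ring_scope.

Section FJ.
Variables (R : realFieldType) (n : nat).
Implicit Types (W : 'M[R]_n) (beta : 'I_n -> R).

Definition row_stochastic W :=
  (forall i j, 0 <= W i j) /\ (forall i, \sum_(j < n) W i j = 1).

(* Edge (i,j) (information flows from i to j) iff w_ji > 0. *)
Definition edge W : rel 'I_n := fun i j => 0 < W j i.

Definition strongly_connected W := forall i j, connect (edge W) i j.

Definition nontrivial_cycle W (c : seq 'I_n) :=
  [/\ cycle (edge W) c, uniq c & (2 <= size c)%N].

Definition global_communicator W m :=
  forall c, nontrivial_cycle W c -> m \in c.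

Definition type_C1 W :=
  strongly_connected W /\ exists m, global_communicator W m.

(* Level decomposition relative to m: lev x = z means x \in L_z^m. *)
Definition level_decomposition W m (lev : 'I_n -> nat) :=
  (forall x, (lev x == 0)%N = (x == m)) /\
  (forall x, x != m ->
     (forall y, y != x -> edge W y x -> (lev y < lev x)%N) /\
     (exists y, [/\ y != x, edge W y x & lev y = (lev x).-1])).

Definition direct_path W m i j :=
  exists p : seq 'I_n,
    [/\ path (edge W) i p, last i p = j & all (fun v => v != m) (i :: p)].

(* Membership in T_3 (direct paths from both s1 and s2), with the
   conventions: s1 \in T_1, m \in T_3, and if s1 has a direct path to s2
   then s2 and every node with a direct path from s2 belong to T_3. *)
Definition in_T3 W m s1 s2 x :=
  x != s1 /\
  (x = m \/ (direct_path W m s1 x /\ direct_path W m s2 x)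
         \/ (direct_path W m s1 s2 /\ (x = s2 \/ direct_path W m s2 x))).

Definition all_simple_paths_through W m s x :=
  forall p : seq 'I_n,
    path (edge W) m p -> last m p = x -> uniq (m :: p) -> s \in m :: p.

Definition diagb beta : 'M[R]_n := \matrix_(i, j) (if i == j then beta i else 0).

Definition FJ_P W beta : 'M[R]_n :=
  invmx (1%:M - (1%:M - diagb beta) *m W) *m diagb beta.

Definition influence_centrality W beta (i : 'I_n) : R :=
  (\sum_(k < n) FJ_P W beta k i) / n%:R.

Definition modify W (a b d : 'I_n) (w : R) : 'M[R]_n :=
  \matrix_(i, j)
    (if i == b then
       (if j == a then W i j + w else if j == d then W i j - w else W i j)
     else W i j).

Definition valid_modification W (a b d : 'I_n) (w : R) :=
  [/\ uniq [:: a; b; d], 0 < W b d, 0 < w & w < W b d].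

Definition permissible W a b d w :=
  valid_modification W a b d w /\ type_C1 (modify W a b d w).

Definition non_redundant W beta s1 s2 a b d w :=
  influence_centrality (modify W a b d w) beta s1 != influence_centrality W beta s1 \/
  influence_centrality (modify W a b d w) beta s2 != influence_centrality W beta s2.

Definition two_stubborn beta s1 s2 :=
  [/\ s1 != s2, 0 < beta s1 < 1, 0 < beta s2 < 1 &
      forall i, i != s1 -> i != s2 -> beta i = 0].

End FJ.

From HB Require Import structures.
From mathcomp Require Import all_boot all_order all_algebra.
From mathcomp Require Import ring.
Import Order.TTheory GRing.Theory Num.Theory.
Set Implicit Arguments. Unset Strict Implicit. Unset Printing Implicit Defensive.
Local Open Scope ring_scope.

(* The column x of P belonging to s2 is the unique solution of
   x = (I - beta) W x + beta e_s2.  By the maximum principle for the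
   row-stochastic, strongly connected W it is nonnegative and maximal at s2.
   Every path from m to a passes through s2, so, by induction on the levels,
   all in-neighbours of a carry the value x_s2 and hence x_a = x_s2 >= x_d.
   If x_a = x_d, the old column still solves the modified system, so the
   columns of s2 and s1 = 1 - s2 are unchanged, contradicting non-redundancy.
   Otherwise the change of the column solves the modified system with a
   nonnegative forcing term, positive at b; it is therefore nonnegative and
   positive at b, and c_s2 increases. *)

Section FriedkinJohnsen.
Variables (R : realFieldType) (n : nat).
Implicit Types (W : 'M[R]_n) (beta f v : 'I_n -> R).

Definition wavg W v k := \sum_j W k j * v j.

Lemma wavgN W v k : wavg W (fun j => - v j) k = - wavg W v k.
Proof. by rewrite /wavg -sumrN; apply: eq_bigr => j _; rewrite mulrN. Qed.

Lemma wavg1 W k : wavg W (fun _ => 1) k = \sum_j W k j.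
Proof. by apply: eq_bigr => j _; rewrite mulr1. Qed.

Lemma wavgB W v1 v2 k :
  wavg W (fun j => v1 j - v2 j) k = wavg W v1 k - wavg W v2 k.
Proof. by rewrite /wavg -sumrB; apply: eq_bigr => j _; rewrite mulrBr. Qed.

Definition fj_fixpoint W beta f v :=
  forall k, v k = (1 - beta k) * wavg W v k + f k.

Lemma eq_fj_fixpoint W beta f1 f2 v :
  f1 =1 f2 -> fj_fixpoint W beta f1 v -> fj_fixpoint W beta f2 v.
Proof. by move=> eq_f fixv k; rewrite -eq_f. Qed.

Lemma fj_fixpointB W beta f1 f2 v1 v2 :
  fj_fixpoint W beta f1 v1 -> fj_fixpoint W beta f2 v2 ->
  fj_fixpoint W beta (fun k => f1 k - f2 k) (fun k => v1 k - v2 k).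
Proof. by move=> fix1 fix2 k; rewrite wavgB [v1 k]fix1 [v2 k]fix2; ring. Qed.

Lemma fj_fixpoint_harmonic W beta f v k :
  fj_fixpoint W beta f v -> beta k = 0 -> f k = 0 -> v k = wavg W v k.
Proof. by move=> fixv bk fk; rewrite fixv bk fk subr0 mul1r addr0. Qed.

Definition fj_mx W beta : 'M[R]_n := 1%:M - (1%:M - diagb beta) *m W.

Lemma fj_mx_mulE W beta v k :
  \sum_i fj_mx W beta k i * v i = v k - (1 - beta k) * wavg W v k.
Proof.
have entry i : fj_mx W beta k i = (k == i)%:R - (1 - beta k) * W k i.
  rewrite !mxE (bigD1 k) //= big1 => [|l kl]; first by rewrite !mxE eqxx addr0.
  by rewrite !mxE eq_sym (negbTE kl) subrr mul0r.
under eq_bigr do rewrite entry mulrBl -mulrA.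
rewrite sumrB -mulr_sumr (bigD1 k) //= eqxx mul1r big1 ?addr0 // => i ki.
by rewrite eq_sym (negbTE ki) mul0r.
Qed.

Lemma FJ_PE W beta k j : FJ_P W beta k j = invmx (fj_mx W beta) k j * beta j.
Proof.
rewrite mxE (bigD1 j) //= big1 ?addr0 => [|i ij]; first by rewrite mxE eqxx.
by rewrite mxE (negbTE ij) mulr0.
Qed.

Section RowStochastic.
Variable W : 'M[R]_n.
Hypothesis W_stoch : row_stochastic W.

Lemma wavg_le v k mu : (forall j, v j <= mu) -> wavg W v k <= mu.
Proof.
have [W_ge0 W_sum1] := W_stoch; move=> v_le.
rewrite -[leRHS]mul1r -(W_sum1 k) mulr_suml; apply: ler_sum => j _.
exact: ler_wpM2l.
Qed.

Lemma wavg_ge v k mu : (forall j, mu <= v j) -> mu <= wavg W v k.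
Proof.
have [W_ge0 W_sum1] := W_stoch; move=> v_ge.
rewrite -[leLHS]mul1r -(W_sum1 k) mulr_suml; apply: ler_sum => j _.
exact: ler_wpM2l.
Qed.

Lemma subharmonic_max_in_neighbour v k y :
  v k <= wavg W v k -> (forall j, v j <= v k) -> 0 < W k y -> v y = v k.
Proof.
have [W_ge0 W_sum1] := W_stoch; move=> v_sub v_max Wky.
have gap_ge0 j : 0 <= W k j * (v k - v j) by rewrite mulr_ge0 ?subr_ge0.
have gap_sum : \sum_j W k j * (v k - v j) = 0.
  apply/eqP; rewrite eq_le sumr_ge0 // andbT.
  under eq_bigr do rewrite mulrBr.
  by rewrite sumrB -mulr_suml W_sum1 mul1r subr_le0.
have /eqP := psumr_eq0P (fun j _ => gap_ge0 j) gap_sum (i := y) isT.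
by rewrite mulf_eq0 gt_eqF //= subr_eq0 => /eqP.
Qed.

Lemma harmonic_eq_in_neighbours v k y c :
  v k = wavg W v k -> (forall j, j != k -> 0 < W k j -> v j = c) ->
  y != k -> 0 < W k y -> v k = c.
Proof.
have [W_ge0 W_sum1] := W_stoch; move=> v_harm v_nbr yk Wky.
have out_sum : \sum_(j | j != k) W k j = 1 - W k k.
  by rewrite -(W_sum1 k) [in RHS](bigD1 k) //= addrC addrK.
have out_pos : 0 < 1 - W k k.
  rewrite -out_sum (bigD1 y) //= ltr_wpDr //; exact: sumr_ge0.
have out_avg : \sum_(j | j != k) W k j * v j = (1 - W k k) * c.
  rewrite -out_sum mulr_suml; apply: eq_bigr => j jk.
  have [-> | Wkj_neq0] := eqVneq (W k j) 0; first by rewrite !mul0r.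
  by rewrite v_nbr // lt_def Wkj_neq0 W_ge0.
have fixed_gap : v k - c = W k k * (v k - c).
  by rewrite {1}v_harm /wavg (bigD1 k) //= out_avg; ring.
have : (1 - W k k) * (v k - c) == 0 by rewrite mulrBl mul1r -fixed_gap subrr.
by rewrite mulf_eq0 gt_eqF //= subr_eq0 => /eqP.
Qed.

Hypothesis W_conn : strongly_connected W.

Lemma subharmonic_max_attained (S : pred 'I_n) v s0 :
  S s0 -> (forall k, ~~ S k -> v k <= wavg W v k) ->
  exists2 s, S s & forall j, v j <= v s.
Proof.
move=> S_s0 v_sub.
have [k0 k0_max] : exists k0, forall j, v j <= v k0.
  by have [k0 _ k0_max] := @arg_maxP _ R _ s0 xpredT v isT; exists k0 => j; apply: k0_max.
have /connectP [p p_path k0_last] := W_conn s0 k0.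
elim/last_ind: p k0 k0_max p_path k0_last => [|p y IH] k k_max /=.
  by move=> _ k_s0; subst k; exists s0.
rewrite rcons_path last_rcons => /andP [p_path edge_py] k_y; subst k.
have [S_y | nS_y] := boolP (S y); first by exists y.
apply: (IH (last s0 p)) => // j.
by rewrite (subharmonic_max_in_neighbour (v_sub y nS_y) k_max edge_py).
Qed.

Variable beta : 'I_n -> R.
Hypothesis beta_range : forall k, 0 <= beta k < 1.
Variable s0 : 'I_n.
Hypothesis beta_s0 : beta s0 != 0.

Lemma fj_fixpoint_ge0 f v :
  (forall k, 0 <= f k) -> fj_fixpoint W beta f v -> forall k, 0 <= v k.
Proof.
move=> f_ge0 fixv.
have [s beta_s v_min] : exists2 s, beta s != 0 & forall j, - v j <= - v s.
  apply: (@subharmonic_max_attained (fun k => beta k != 0)) beta_s0 _.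
  move=> k /negPn/eqP beta_k.
  by rewrite wavgN [v k]fixv beta_k subr0 mul1r lerN2 lerDl.
have beta_s_gt0 : 0 < beta s by rewrite lt_def beta_s; case/andP: (beta_range s).
have : (1 - beta s) * v s <= v s.
  rewrite [leRHS]fixv ler_wpDr // ler_wpM2l ?subr_ge0 //.
  - by case/andP: (beta_range s) => _ /ltW.
  - by apply: wavg_ge => j; rewrite -lerN2.
rewrite mulrBl mul1r gerBl pmulr_rge0 // => v_s_ge0 k.
by apply: le_trans v_s_ge0 _; rewrite -lerN2.
Qed.

Lemma fj_fixpoint_unique f v1 v2 :
  fj_fixpoint W beta f v1 -> fj_fixpoint W beta f v2 -> forall k, v1 k = v2 k.
Proof.
have diff_ge0 u1 u2 k : fj_fixpoint W beta f u1 -> fj_fixpoint W beta f u2 ->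
    0 <= u1 k - u2 k.
  move=> fix1 fix2; apply: (fj_fixpoint_ge0 _ (fj_fixpointB fix1 fix2)) => i.
  by rewrite subrr.
move=> fix1 fix2 k; apply/eqP; rewrite -subr_eq0 eq_le -oppr_ge0 opprB.
by rewrite !diff_ge0.
Qed.

Lemma fj_mx_unit : fj_mx W beta \in unitmx.
Proof.
rewrite unitmxE unitfE -det_tr; apply/det0P => -[u u_neq0 u_ker].
move/eqP: u_neq0; apply; apply/rowP => k; rewrite mxE.
have u_fix : fj_fixpoint W beta (fun _ => 0) (fun i => u 0 i).
  move=> i; move/rowP/(_ i): u_ker; rewrite !mxE.
  under eq_bigr do rewrite mxE mulrC.
  by rewrite fj_mx_mulE addr0 => /eqP; rewrite subr_eq0 => /eqP.
have zero_fix : fj_fixpoint W beta (fun _ => 0) (fun _ => 0).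
  by move=> i; rewrite /wavg big1 ?mulr0 ?addr0 // => j _; rewrite mulr0.
exact: fj_fixpoint_unique u_fix zero_fix k.
Qed.

Lemma FJ_P_fixpoint j :
  fj_fixpoint W beta (fun k => if k == j then beta k else 0)
    (fun k => FJ_P W beta k j).
Proof.
move=> k; have := congr1 (fun A : 'M[R]_n => A k j) (mulKVmx fj_mx_unit (diagb beta)).
by rewrite /= mxE fj_mx_mulE [diagb _ _ _]mxE => <-; rewrite [RHS]addrC subrK.
Qed.

Lemma FJ_P_row_sum k : \sum_j FJ_P W beta k j = 1.
Proof.
have sum_fix : fj_fixpoint W beta beta (fun i => \sum_j FJ_P W beta i j).
  move=> i; under eq_bigr => j _ do rewrite (FJ_P_fixpoint j i).
  rewrite big_split /= -mulr_sumr /wavg exchange_big /=.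
  congr (_ * _ + _); first by apply: eq_bigr => l _; rewrite mulr_sumr.
  rewrite (bigD1 i) //= eqxx big1 ?addr0 // => j /negbTE.
  by rewrite eq_sym => ->.
have one_fix : fj_fixpoint W beta beta (fun _ => 1).
  by move=> i; rewrite wavg1 (proj2 W_stoch) mulr1 subrK.
exact: fj_fixpoint_unique sum_fix one_fix k.
Qed.

Lemma FJ_P_col_le_diag j k : FJ_P W beta k j <= FJ_P W beta j j.
Proof.
set x := fun i => FJ_P W beta i j.
have x_fix : fj_fixpoint W beta (fun i => if i == j then beta i else 0) x.
  exact: FJ_P_fixpoint.
have x_ge0 : forall i, 0 <= x i.
  apply: fj_fixpoint_ge0 x_fix => i.
  by case: ifP => // _; case/andP: (beta_range i).
have [s beta_s x_max] : exists2 s, beta s != 0 & forall i, x i <= x s.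
  apply: (@subharmonic_max_attained (fun i => beta i != 0)) beta_s0 _.
  move=> i /negPn/eqP beta_i; rewrite -(fj_fixpoint_harmonic x_fix beta_i) //.
  by case: ifP.
have [s_j | s_j] := eqVneq s j; first by have := x_max k; rewrite s_j.
have beta_s_gt0 : 0 < beta s by rewrite lt_def beta_s; case/andP: (beta_range s).
have : x s <= (1 - beta s) * x s.
  rewrite {1}x_fix (negbTE s_j) addr0 ler_wpM2l ?subr_ge0 ?wavg_le //.
  by case/andP: (beta_range s) => _ /ltW.
rewrite mulrBl mul1r lerBrDl gerDr pmulr_rle0 // => x_s_le0.
exact: le_trans (x_max k) (le_trans x_s_le0 (x_ge0 j)).
Qed.

End RowStochastic.
End FriedkinJohnsen.

Lemma eq_influence_centrality (R : realFieldType) n (W1 W2 : 'M[R]_n) beta j :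
  (forall k, FJ_P W1 beta k j = FJ_P W2 beta k j) ->
  influence_centrality W1 beta j = influence_centrality W2 beta j.
Proof.
by move=> eq_col; rewrite /influence_centrality; under eq_bigr do rewrite eq_col.
Qed.

Section TwoStubborn.
Variables (R : realFieldType) (n : nat) (beta : 'I_n -> R) (s1 s2 : 'I_n).
Hypothesis stub : two_stubborn beta s1 s2.

Lemma two_stubborn_range k : 0 <= beta k < 1.
Proof.
case: stub => _ /andP[b1_gt0 b1_lt1] /andP[b2_gt0 b2_lt1] beta0.
have [-> | k_s1] := eqVneq k s1; first by rewrite (ltW b1_gt0) b1_lt1.
have [-> | k_s2] := eqVneq k s2; first by rewrite (ltW b2_gt0) b2_lt1.
by rewrite beta0 // lexx ltr01.
Qed.

Lemma FJ_P_two_stubborn (W : 'M[R]_n) :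
  row_stochastic W -> strongly_connected W ->
  forall k, FJ_P W beta k s1 = 1 - FJ_P W beta k s2.
Proof.
case: stub => s12 _ /andP[b2_gt0 _] beta0 W_stoch W_conn k.
have beta_s2 : beta s2 != 0 by rewrite gt_eqF.
rewrite -(FJ_P_row_sum W_stoch W_conn two_stubborn_range beta_s2 k).
rewrite (bigD1 s1) // (bigD1 s2) 1?eq_sym //= big1 ?addr0 ?addrK // => j.
by case/andP=> j_s1 j_s2; rewrite FJ_PE beta0 ?mulr0.
Qed.

End TwoStubborn.

Section Modification.
Variables (R : realFieldType) (n : nat) (W : 'M[R]_n) (a b d : 'I_n) (w : R).
Hypothesis W_mod : valid_modification W a b d w.
Local Notation W' := (modify W a b d w).

Lemma wavg_modify v k :
  wavg W' v k = wavg W v k + (if k == b then w * (v a - v d) else 0).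
Proof.
have d_neq_a : d != a.
  by case: W_mod; rewrite /= !inE negb_or => /andP[/andP[_ a_d] _]; rewrite eq_sym.
rewrite /wavg; have [-> | k_b] := eqVneq k b; last first.
  by rewrite addr0; apply: eq_bigr => j _; rewrite mxE (negbTE k_b).
rewrite (bigD1 a) // (bigD1 d) //= [in RHS](bigD1 a) // [in RHS](bigD1 d) //=.
rewrite !mxE !eqxx (negbTE d_neq_a) (eq_bigr (fun j => W b j * v j)); first ring.
by move=> j /andP[j_a j_d]; rewrite mxE eqxx (negbTE j_a) (negbTE j_d).
Qed.

Lemma modify_row_stochastic : row_stochastic W -> row_stochastic W'.
Proof.
case=> W_ge0 W_sum1; have [_ _ w_gt0 w_lt] := W_mod; split=> i.
  move=> j; rewrite mxE; have [-> | _] := eqVneq i b; last exact: W_ge0.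
  have [_ | _] := eqVneq j a; first by rewrite addr_ge0 ?W_ge0 ?ltW.
  have [-> | _] := eqVneq j d; last exact: W_ge0.
  by rewrite subr_ge0 ltW.
by rewrite -wavg1 wavg_modify wavg1 W_sum1 subrr mulr0 if_same addr0.
Qed.

Lemma fj_fixpoint_modify beta f v :
  fj_fixpoint W beta f v ->
  fj_fixpoint W' beta
    (fun k => f k - (1 - beta k) * (if k == b then w * (v a - v d) else 0)) v.
Proof. by move=> fixv k; rewrite wavg_modify [v k]fixv; ring. Qed.

Hypotheses (W_stoch : row_stochastic W) (W_conn : strongly_connected W).
Hypothesis W'_conn : strongly_connected W'.
Variables (beta : 'I_n -> R) (s0 : 'I_n).
Hypotheses (beta_range : forall k, 0 <= beta k < 1) (beta_s0 : beta s0 != 0).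

Lemma FJ_P_modify_col_eq j :
  FJ_P W beta d j = FJ_P W beta a j -> forall k, FJ_P W' beta k j = FJ_P W beta k j.
Proof.
have W'_stoch := modify_row_stochastic W_stoch.
have P_fix := FJ_P_fixpoint W_stoch W_conn beta_range beta_s0 j.
have P'_fix := FJ_P_fixpoint W'_stoch W'_conn beta_range beta_s0 j.
move=> P_da; apply: (fj_fixpoint_unique W'_stoch W'_conn beta_range beta_s0 P'_fix).
apply: eq_fj_fixpoint (fj_fixpoint_modify P_fix) => k.
by rewrite P_da subrr mulr0 if_same mulr0 subr0.
Qed.

Lemma influence_centrality_modify_lt j :
  FJ_P W beta d j < FJ_P W beta a j ->
  influence_centrality W beta j < influence_centrality W' beta j.
Proof.
have [_ _ w_gt0 _] := W_mod; have W'_stoch := modify_row_stochastic W_stoch.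
have P_fix := FJ_P_fixpoint W_stoch W_conn beta_range beta_s0 j.
have P'_fix := FJ_P_fixpoint W'_stoch W'_conn beta_range beta_s0 j.
move=> P_da.
set g := fun k => (1 - beta k) *
  (if k == b then w * (FJ_P W beta a j - FJ_P W beta d j) else 0).
have one_sub_beta_gt0 k : 0 < 1 - beta k by rewrite subr_gt0; case/andP: (beta_range k).
have g_ge0 k : 0 <= g k.
  rewrite /g mulr_ge0 ?(ltW (one_sub_beta_gt0 k)) //.
  by case: ifP => // _; rewrite mulr_ge0 ?subr_ge0 ?ltW.
have delta_fix : fj_fixpoint W' beta g (fun k => FJ_P W' beta k j - FJ_P W beta k j).
  apply: eq_fj_fixpoint (fj_fixpointB P'_fix (fj_fixpoint_modify P_fix)).
  by move=> k; rewrite subKr.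
have delta_ge0 := fj_fixpoint_ge0 W'_stoch W'_conn beta_range beta_s0 g_ge0 delta_fix.
have delta_b_gt0 : 0 < FJ_P W' beta b j - FJ_P W beta b j.
  rewrite delta_fix ltr_wpDl //.
    by rewrite mulr_ge0 ?(ltW (one_sub_beta_gt0 b)) ?(wavg_ge W'_stoch).
  by rewrite /g eqxx !mulr_gt0 // subr_gt0.
rewrite -subr_gt0 /influence_centrality -mulrBl -sumrB divr_gt0 ?ltr0n //.
  by rewrite (bigD1 b) //= ltr_wpDr // sumr_ge0.
exact: leq_ltn_trans (leq0n j) (ltn_ord j).
Qed.

End Modification.

Definition all_paths_through (R : realFieldType) n (W : 'M[R]_n) m s k :=
  forall p, path (edge W) m p -> last m p = k -> s \in m :: p.

Section Paths.
Variables (R : realFieldType) (n : nat) (W : 'M[R]_n) (m s : 'I_n).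

Lemma all_paths_through_simple k :
  all_simple_paths_through W m s k -> all_paths_through W m s k.
Proof.
move=> simple_thr p p_path; case: (shortenP p_path) => q q_path q_uniq q_sub q_last.
have := simple_thr q q_path q_last q_uniq.
by rewrite !inE => /orP[-> // | /q_sub ->]; rewrite orbT.
Qed.

Lemma all_paths_through_in_neighbour k y :
  all_paths_through W m s k -> k != s -> edge W y k -> all_paths_through W m s y.
Proof.
move=> k_thr k_s e_yk p p_path p_last.
have := k_thr (rcons p k); rewrite rcons_path p_path p_last e_yk last_rcons.
by rewrite -rcons_cons mem_rcons inE eq_sym (negbTE k_s) => /(_ isT erefl).
Qed.

Lemma all_paths_through_neq_m k : s != m -> all_paths_through W m s k -> k != m.
Proof.
move=> s_m k_thr; apply: contraTneq s_m => k_m.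
by have := k_thr [::] isT (esym k_m); rewrite inE negbK.
Qed.

Lemma direct_path_neq_m i j : direct_path W m i j -> i != m /\ j != m.
Proof.
case=> p [_ <- /allP p_m]; split; first by apply: p_m; rewrite inE eqxx.
by apply: p_m; rewrite mem_last.
Qed.

Variable lev : 'I_n -> nat.
Hypothesis levW : level_decomposition W m lev.

Lemma lev_edge x y : x != m -> y != x -> edge W y x -> (lev y < lev x)%N.
Proof. by move=> x_m; apply: (proj1 ((proj2 levW) x x_m)). Qed.

Lemma lev_path_le i p :
  path (edge W) i p -> all (fun v => v != m) p -> (lev i <= lev (last i p))%N.
Proof.
elim: p i => [|y p IH] i //= /andP[e_iy y_path] /andP[y_m p_m].
apply: leq_trans (IH y y_path p_m).
by have [-> // | y_i] := eqVneq i y; rewrite ltnW // lev_edge // eq_sym.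
Qed.

Lemma lev_direct_path_lt i j : direct_path W m i j -> i != j -> (lev i < lev j)%N.
Proof.
case=> p [p_path <- /andP[_ p_m]].
elim: p i p_path p_m => [|y p IH] i /=; first by rewrite eqxx.
case/andP=> e_iy y_path /andP[y_m p_m].
have [<- | y_i] := eqVneq y i; first exact: IH.
by move=> _; apply: leq_trans (lev_path_le y_path p_m); rewrite lev_edge // eq_sym.
Qed.

Hypothesis s_m : s != m.

Lemma all_paths_through_lev_lt k :
  all_paths_through W m s k -> k != s -> (lev s < lev k)%N.
Proof.
have [N] := ubnP (lev k); elim: N k => // N IH k lt_kN k_thr k_s.
have k_m := all_paths_through_neq_m s_m k_thr.
have [_ [y [y_k e_yk _]]] := (proj2 levW) k k_m.
have lt_yk := lev_edge k_m y_k e_yk.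
have [<- // | y_s] := eqVneq y s.
have y_thr := all_paths_through_in_neighbour k_thr k_s e_yk.
exact: ltn_trans (IH y (leq_trans lt_yk lt_kN) y_thr y_s) lt_yk.
Qed.

Lemma direct_path_not_all_paths_through i :
  direct_path W m i s -> i != s -> ~ all_paths_through W m s i.
Proof.
move=> dp_is i_s i_thr.
by have := ltn_trans (lev_direct_path_lt dp_is i_s) (all_paths_through_lev_lt i_thr i_s);
  rewrite ltnn.
Qed.

Lemma harmonic_all_paths_through v :
  row_stochastic W ->
  (forall k, all_paths_through W m s k -> k != s -> v k = wavg W v k) ->
  forall k, all_paths_through W m s k -> v k = v s.
Proof.
move=> W_stoch v_harm k; have [N] := ubnP (lev k).
elim: N k => // N IH k lt_kN k_thr; have [-> // | k_s] := eqVneq k s.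
have k_m := all_paths_through_neq_m s_m k_thr.
have [lev_in [y [y_k e_yk _]]] := (proj2 levW) k k_m.
apply: (harmonic_eq_in_neighbours W_stoch (v_harm k k_thr k_s) _ y_k e_yk).
move=> j j_k e_jk; apply: IH; last exact: all_paths_through_in_neighbour k_thr k_s e_jk.
exact: leq_trans (lev_edge k_m j_k e_jk) lt_kN.
Qed.

End Paths.

Theorem corollary1 (R : realFieldType) (n : nat) (W : 'M[R]_n)
    (beta : 'I_n -> R) (s1 s2 m a b d : 'I_n) (w : R) :
  row_stochastic W ->
  type_C1 W ->
  two_stubborn beta s1 s2 ->
  W s1 s1 = 0 -> W s2 s2 = 0 ->
  global_communicator W m ->
  (exists lev, level_decomposition W m lev /\ (lev s1 <= lev s2)%N) ->
  direct_path W m s1 s2 ->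
  permissible W a b d w ->
  non_redundant W beta s1 s2 a b d w ->
  in_T3 W m s1 s2 a -> all_simple_paths_through W m s2 a ->
  ~ (in_T3 W m s1 s2 d /\ all_simple_paths_through W m s2 d) ->
  1 / 2 <= beta s2 ->
  influence_centrality W beta s2 < influence_centrality (modify W a b d w) beta s2.
Proof.
move=> W_stoch [W_conn _] stub _ _ _ [lev [levW _]] dp12 [W_mod [W'_conn _]] nonred
  _ a_simple _ _.
have [s12 _ /andP[beta_s2_gt0 _] beta_other] := stub.
have beta_range := two_stubborn_range stub.
have beta_s2 : beta s2 != 0 by rewrite gt_eqF.
have [_ s2_m] := direct_path_neq_m dp12.
have s1_thr := direct_path_not_all_paths_through levW s2_m dp12 s12.
have P_fix := FJ_P_fixpoint W_stoch W_conn beta_range beta_s2 s2.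
have P_a : FJ_P W beta a s2 = FJ_P W beta s2 s2.
  apply: (harmonic_all_paths_through levW s2_m (v := fun k => FJ_P W beta k s2) W_stoch _
    (all_paths_through_simple a_simple)).
  move=> k k_thr k_s2; apply: (fj_fixpoint_harmonic P_fix); last by rewrite (negbTE k_s2).
  by apply: beta_other k_s2; apply: contraPneq s1_thr => <-.
have := FJ_P_col_le_diag W_stoch W_conn beta_range beta_s2 s2 d.
rewrite -P_a le_eqVlt => /orP[/eqP P_da | P_da]; last first.
  exact: (influence_centrality_modify_lt W_mod W_stoch W_conn W'_conn
    beta_range beta_s2 P_da).
have col2 := FJ_P_modify_col_eq W_mod W_stoch W_conn W'_conn beta_range beta_s2 P_da.
have W'_stoch := modify_row_stochastic W_mod W_stoch.
have col1 k : FJ_P (modify W a b d w) beta k s1 = FJ_P W beta k s1.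
  rewrite (FJ_P_two_stubborn stub W'_stoch W'_conn).
  by rewrite (FJ_P_two_stubborn stub W_stoch W_conn) col2.
by case: nonred => /eqP[]; apply: eq_influence_centrality.
Qed.
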